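(* Consider the Que Sera Consensus (QSC) protocol, as described in the context, running on $n$ nodes atop a full-spread threshold synchronous broadcast primitive $\mathrm{TSB}(t_r,t_b,n)$ with $t_r>0$ and $t_b>0$. If QSC delivers history $h_{(s+2)_i}$ on node $i$ at the end of a consensus round starting at time-step $s$, then the resulting history $h_{(s+2)_j}$ of every node $j$ in the same round is identical to $h_{(s+2)_i}$.
   Context: Threshold synchronous broadcast (TSB). A group of $n$ nodes, numbered $1,\dots,n$, operates in integer logical time-steps $0,1,2,\dots$. Nodes may fail only by crashing permanently. In each time-step every non-failed node calls $\mathrm{Broadcast}(m)$ exactly once; the call returns a pair $(R,B)$ of message sets. A primitive provides $\mathrm{TSB}(t_r,t_b,t_s)$ if: (lock-step synchrony) a call to $\mathrm{Broadcast}(m)$ at step $s$ returns at step $s+1$ unless the node fails before reaching step $s+1$; (receive threshold) if node $i$'s call at step $s$ returns $(R,B)$, there is $N_R\subseteq\{1,\dots,n\}$ with $|N_R|\ge t_r$ such that $R$ is exactly the set of messages broadcast by the nodes in $N_R$ during step $s$; (broadcast threshold) there is $N_B\subseteq\{1,\dots,n\}$ with $|N_B|\ge t_b$ such that $B$ is exactly the set of messages broadcast by the nodes in $N_B$ during step $s$; (spread threshold) if some node's call at step $s$ returns $(R,B)$ with $m'\in B$, then there are at least $t_s$ nodes whose receive sets $R$ returned from their step-$s$ calls include $m'$ (a node that fails before completing step $s$ counts if it would have received $m'$ had it not failed). The case $t_s=n$ is called full-spread. Histories and priorities. A proposal is a triple $\langle i,m,r\rangle$ (node, message, numeric priority). A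 history is a finite list of proposals; $[]$ is the empty history and $\|$ is list concatenation. The priority of a nonempty history is the priority $r$ of its last proposal. A history $h$ is best in a set $H$ if $h\in H$ and no $h'\in H$ has strictly greater priority; $h$ is uniquely best in $H$ if $h\in H$ and no other $h'\ne h$ in $H$ has priority greater than or equal to that of $h$. QSC protocol. It is parameterized by functions ChooseMessage (returns some message, possibly empty), Deliver (passes a history to the application), RandomValue (returns a value drawn using node-private randomness from a fixed nontrivial distribution, the same on every node), and Broadcast (the TSB primitive). Each node $i$ runs: set $h\leftarrow[]$; then forever repeat a consensus round: $m\leftarrow\mathrm{ChooseMessage}()$; $r\leftarrow\mathrm{RandomValue}()$; $h'\leftarrow h\,\|\,[\langle i,m,r\rangle]$; $(R',B')\leftarrow\mathrm{Broadcast}(h')$; $h''\leftarrow$ any best history in $B'$; $(R'',B'')\leftarrow\mathrm{Broadcast}(h'')$; $h\leftarrow$ any best history in $R''$; if $h\in B''$ and $h$ is uniquely best in $R'$, call $\mathrm{Deliver}(h)$. Each round thus occupies two time-steps; a round starting at step $s$ ends at step $s+2$. The value of $h$ at the start of a round is the node's initial history for that round, and the value of $h$ assigned from $R''$ (denoted $h_{(s+2)_j}$ for node $j$) is its resulting history for that round. *)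

From mathcomp Require Import all_boot all_order.
Set Implicit Arguments. Unset Strict Implicit. Unset Printing Implicit Defensive.
Import Order.TTheory.
Local Open Scope order_scope.

Definition proposal (n : nat) (M : Type) (P : Type) := ('I_n * M * P)%type.
Definition history (n : nat) (M : Type) (P : Type) := seq (proposal n M P).

Definition hprio (n : nat) (M : Type) (d : Order.disp_t) (P : orderType d)
  (h : history n M P) : option P :=
  if h is x :: t then Some (last x t).2 else None.

(* Strict / non-strict comparison of priorities (None, i.e. the empty
   history, which never occurs as a broadcast message, is taken as bottom). *)
Definition oltP (d : Order.disp_t) (P : orderType d) (a b : option P) : bool :=
  match a, b with
  | _, None => false
  | None, Some _ => true
  | Some x, Some y => x < y
  end.
Definition oleP (d : Order.disp_t) (P : orderType d) (a b : option P) : bool :=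
  match a, b with
  | None, _ => true
  | Some _, None => false
  | Some x, Some y => x <= y
  end.

Definition best (n : nat) (M : eqType) (d : Order.disp_t) (P : orderType d)
  (h : history n M P) (H : seq (history n M P)) : bool :=
  (h \in H) && all (fun h' => ~~ oltP (hprio h) (hprio h')) H.

Definition uniquely_best (n : nat) (M : eqType) (d : Order.disp_t) (P : orderType d)
  (h : history n M P) (H : seq (history n M P)) : bool :=
  (h \in H) && all (fun h' => (h' == h) || ~~ oleP (hprio h) (hprio h')) H.

(* The set of messages broadcast during a step by the nodes of N, where
   [bc] is the set of nodes that actually call Broadcast in that step and
   [msg k] is the message broadcast by node k. *)
Definition sent (n : nat) (T : eqType) (N bc : {set 'I_n}) (msg : 'I_n -> T) : seq T :=
  [seq msg x | x in N :&: bc].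

(* TSB(t_r, t_b, t_s) guarantees for one time-step.
   bc  : nodes calling Broadcast in this step;
   ret : nodes whose call returns (did not fail before the next step);
   NR k, NB k : the witness sets N_R, N_B for node k's call (for a node
   whose call does not return, NR k describes what it would have received). *)
Definition tsb_step (n : nat) (T : eqType) (tr tb ts : nat)
  (bc ret : {set 'I_n}) (msg : 'I_n -> T) (NR NB : 'I_n -> {set 'I_n}) : Prop :=
  (forall k, k \in ret -> tr <= #|NR k| /\ tb <= #|NB k|) /\
  (forall k m, k \in ret -> m \in sent (NB k) bc msg ->
     ts <= #|[set j | m \in sent (NR j) bc msg]|).

(** If node i delivers h, then h is in the broadcast set B'' of i and, by full
    spread, in the receive set R'' of every node j; so the history h_j that j
    picks from R'' has priority at least that of h.  But h_j is some h''_k,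
    which lies in B' of k and hence, again by full spread, in R' of i, where h
    is uniquely best: thus h_j = h. *)
From mathcomp Require Import all_boot all_order.
Import Order.TTheory.

Set Implicit Arguments.
Unset Strict Implicit.
Unset Printing Implicit Defensive.

Lemma mem_card_full (T : finType) (A : {set T}) (x : T) : #|T| <= #|A| -> x \in A.
Proof.
move=> leTA; suff -> : A = setT by rewrite inE.
by apply/eqP; rewrite eqEcard subsetT cardsT.
Qed.

Lemma full_spread_received (n : nat) (T : eqType) (tr tb : nat)
    (bc ret : {set 'I_n}) (msg : 'I_n -> T) (NR NB : 'I_n -> {set 'I_n})
    (k j : 'I_n) (x : T) :
  tsb_step tr tb n bc ret msg NR NB -> k \in ret -> x \in sent (NB k) bc msg ->
  x \in sent (NR j) bc msg.
Proof.
move=> [_ spread] kret xB.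
suff : j \in [set j | x \in sent (NR j) bc msg] by rewrite inE.
by apply: mem_card_full; rewrite card_ord; exact: spread kret xB.
Qed.

Section Priorities.

Variables (n : nat) (M : eqType) (d : Order.disp_t) (P : orderType d).
Implicit Types (a b : option P) (g h : history n M P) (H : seq (history n M P)).

Lemma oltPNge a b : oltP a b = ~~ oleP b a.
Proof. by case: a => [x|]; case: b => [y|] //=; rewrite ltNge. Qed.

Lemma best_nlt h g H : best h H -> g \in H -> ~~ oltP (hprio h) (hprio g).
Proof. by case/andP=> _ /allP; apply. Qed.

Lemma uniquely_best_eq h g H :
  uniquely_best h H -> g \in H -> ~~ oltP (hprio g) (hprio h) -> g = h.
Proof.
case/andP=> _ /allP hbest gH; rewrite oltPNge negbK.
by case/orP: (hbest g gH) => [/eqP // | /negbTE->].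
Qed.

End Priorities.

Theorem lemma3 (n : nat) (M : eqType) (d : Order.disp_t) (P : orderType d)
  (tr tb : nat)
  (* initial histories, chosen messages, random priorities of the round *)
  (h0 : 'I_n -> history n M P) (m : 'I_n -> M) (r : 'I_n -> P)
  (* alive1: nodes broadcasting at step s; alive2: nodes completing step s
     (broadcasting at step s+1); alive3: nodes completing step s+1 *)
  (alive1 alive2 alive3 : {set 'I_n})
  (NR1 NB1 NR2 NB2 : 'I_n -> {set 'I_n})
  (h2 : 'I_n -> history n M P)    (* h'' of each node *)
  (hres : 'I_n -> history n M P)  (* resulting history h_(s+2) of each node *)
  (i : 'I_n) :
  0 < tr -> 0 < tb ->
  alive2 \subset alive1 -> alive3 \subset alive2 ->
  let h1 := fun k => rcons (h0 k) (k, m k, r k) in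
  tsb_step tr tb n alive1 alive2 h1 NR1 NB1 ->
  tsb_step tr tb n alive2 alive3 h2 NR2 NB2 ->
  (forall k, k \in alive2 -> best (h2 k) (sent (NB1 k) alive1 h1)) ->
  (forall j, j \in alive3 -> best (hres j) (sent (NR2 j) alive2 h2)) ->
  (* QSC delivers hres i on node i *)
  i \in alive3 ->
  hres i \in sent (NB2 i) alive2 h2 ->
  uniquely_best (hres i) (sent (NR1 i) alive1 h1) ->
  forall j, j \in alive3 -> hres j = hres i.
Proof.
move=> _ _ _ _ h1 tsb1 tsb2 best2 best3 i3 iB2 iunique j j3.
have jbest := best3 j j3.
have [k /setIP[_ k2] hres_j] := imageP (proj1 (andP jbest)).
have iR2 : hres i \in sent (NR2 j) alive2 h2 := full_spread_received j tsb2 i3 iB2.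
have kR1 : h2 k \in sent (NR1 i) alive1 h1.
  exact: full_spread_received tsb1 k2 (proj1 (andP (best2 k k2))).
rewrite hres_j; apply: uniquely_best_eq iunique kR1 _.
by rewrite -hres_j; exact: best_nlt jbest iR2.
Qed.
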